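(* Let $\Phi$ be a probabilistic cellular automaton on $\mathcal{A}^{\mathbb{Z}}$ of radius $r$, i.e. with neighborhood $\mathcal{N}\subset[\![-r,r]\!]$. Then the action $\mu\mapsto\Phi\mu$ is $2^r$-Lipschitz on $\mathcal{M}(\mathcal{A}^{\mathbb{Z}})$ for the distance $d_{\mathcal{M}}$, i.e. $d_{\mathcal{M}}(\Phi\mu,\Phi\nu)\le 2^r d_{\mathcal{M}}(\mu,\nu)$ for all $\mu,\nu\in\mathcal{M}(\mathcal{A}^{\mathbb{Z}})$.
   Context: $\mathcal{A}$ is a finite alphabet. A PCA with finite neighborhood $\mathcal{N}\subset\mathbb{Z}$ is given by a stochastic matrix $\varphi:\mathcal{A}^{\mathcal{N}}\times\mathcal{A}\to[0,1]$ (rows summing to $1$); its transition kernel is $\Phi(x,[w]_U)=\prod_{i\in U}\varphi(x_{i+\mathcal{N}},w_i)$ for finite $U\subset\mathbb{Z}$, $w\in\mathcal{A}^U$, and it acts on probability measures by $\Phi\mu(E)=\int\Phi(x,E)\,d\mu(x)$. $\mathcal{M}(\mathcal{A}^{\mathbb{Z}})$ is the set of shift-invariant Borel probability measures on $\mathcal{A}^{\mathbb{Z}}$, and $d_{\mathcal{M}}(\mu,\nu)=\sum_{n\ge0}2^{-n}\|\mu-\nu\|_{[-n,n]}$ with $\|\mu-\nu\|_U=\frac12\sum_{u\in\mathcal{A}^U}|\mu([u])-\nu([u])|$, $[u]$ the cylinder $\{x:x_U=u\}$. *)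

From HB Require Import structures.
From mathcomp Require Import all_boot all_order all_algebra.
From mathcomp Require Import all_classical all_reals all_analysis.
From mathcomp Require Import finmap.
Set Implicit Arguments. Unset Strict Implicit. Unset Printing Implicit Defensive.
Import Order.TTheory GRing.Theory Num.Theory.
Local Open Scope classical_set_scope.
Local Open Scope ring_scope.

Section PCA.
Variables (A : finType) (a0 : A).

(* (indexed by the inhabitant a0, used as the default point of A^Z) *)
Definition rawconf (a : A) : Type := int -> A.
HB.instance Definition _ := Choice.on (rawconf a0).
HB.instance Definition _ := isPointed.Build (rawconf a0) (fun _ => a0).

(* Elementary cylinders {x | x_i = a}; they generate the product
   (= Borel, A finite, Z countable) sigma-algebra of A^Z. *)
Definition elem_cylinders : set (set (rawconf a0)) :=
  [set E | exists (i : int) (a : A), E = [set x | x i = a]].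

Definition conf := g_sigma_algebraType elem_cylinders.

Definition shift (x : conf) : conf := fun i => x (i + 1)%R.

Definition shift_invariant (R : realType) (mu : probability conf R) :=
  forall E : set conf, measurable E -> mu (shift @^-1` E) = mu E.

(* Positions of the window [-n, n], indexed by 'I_(2n+1). *)
Definition win (n : nat) (k : 'I_(n.*2.+1)) : int := (k%:Z - n%:Z)%R.

Definition cyl (n : nat) (u : {ffun 'I_(n.*2.+1) -> A}) : set conf :=
  [set x | forall k, x (win k) = u k].

Definition tvn (R : realType) (P Q : forall n, {ffun 'I_(n.*2.+1) -> A} -> R)
    (n : nat) : R :=
  2^-1 * \sum_(u : {ffun 'I_(n.*2.+1) -> A}) `|P n u - Q n u|.

Definition dM (R : realType) (P Q : forall n, {ffun 'I_(n.*2.+1) -> A} -> R) : \bar R :=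
  (\sum_(0 <= n <oo) ((2 ^- n) * tvn P Q n)%:E)%E.

Definition cylval (R : realType) (mu : probability conf R) :
    forall n, {ffun 'I_(n.*2.+1) -> A} -> R :=
  fun n u => fine (mu (cyl u)).

Definition pat (N : {fset int}) (x : conf) (i : int) : {ffun N -> A} :=
  [ffun k : N => x (i + val k)%R].

(* Transition kernel on cylinders:
   Phi(x, [w]_U) = prod_{i in U} phi(x_{i+N}, w_i), with U = [-n,n]. *)
Definition kernel_cyl (R : realType) (N : {fset int}) (phi : {ffun N -> A} -> A -> R)
    (n : nat) (w : {ffun 'I_(n.*2.+1) -> A}) (x : conf) : R :=
  \prod_(k : 'I_(n.*2.+1)) phi (pat N x (win k)) (w k).

(* Cylinder values of Phi mu: Phi mu([w]) = int Phi(x,[w]) dmu(x). *)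
Definition pca_cylval (R : realType) (N : {fset int}) (phi : {ffun N -> A} -> A -> R)
    (mu : probability conf R) : forall n, {ffun 'I_(n.*2.+1) -> A} -> R :=
  fun n w => fine (\int[mu]_x (kernel_cyl phi w x)%:E).

Definition stochastic (R : realType) (N : {fset int}) (phi : {ffun N -> A} -> A -> R) :=
  forall p, (forall a, 0 <= phi p a) /\ \sum_(a : A) phi p a = 1.

End PCA.

From HB Require Import structures.
From mathcomp Require Import all_boot all_order all_algebra.
From mathcomp Require Import all_classical all_reals all_analysis.
From mathcomp Require Import finmap.
From mathcomp Require Import zify measurable_realfun.
Import Order.TTheory GRing.Theory Num.Theory.
Local Open Scope classical_set_scope.
Local Open Scope ring_scope.
Set Implicit Arguments. Unset Strict Implicit. Unset Printing Implicit Defensive.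

(* Since N lies in [-r, r], the kernel Phi(x, [w]) for w on [-n, n] only
   depends on x on [-(n+r), n+r].  Hence the cylinder values of Phi mu on
   [-n, n] are obtained from those of mu on [-(n+r), n+r] by a stochastic
   matrix, which does not increase total variation:
   ||Phi mu - Phi nu||_[-n,n] <= ||mu - nu||_[-(n+r),n+r].
   Summing with weights 2^-n = 2^r 2^-(n+r) gives the factor 2^r. *)

Lemma eseries_pow2_shift_le (R : realType) (r : nat) (s t : nat -> R) :
  (forall n, 0 <= s n) -> (forall n, 0 <= t n) -> (forall n, s n <= t (n + r)%N) ->
  (\sum_(0 <= n <oo) (2 ^- n * s n)%:E <=
   (2 ^+ r)%:E * \sum_(0 <= n <oo) (2 ^- n * t n)%:E)%E.
Proof.
move=> s0 t0 st.
have w0 n : (0 : R) <= 2 ^- n by rewrite invr_ge0 exprn_ge0.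
have wt0 n : (0 <= (2 ^- n * t n)%:E)%E by rewrite lee_fin mulr_ge0.
have shifted_weight n : (2 : R) ^- n = 2 ^+ r * 2 ^- (n + r).
  by rewrite exprD invfM mulrCA mulfV ?mulr1 // expf_neq0.
apply: (@le_trans _ _ (\sum_(0 <= n <oo) (2 ^- n * t (n + r)%N)%:E)%E).
  by apply: lee_nneseries => [n _ _|n _]; rewrite lee_fin ?mulr_ge0 ?ler_wpM2l.
under eq_eseriesr do rewrite shifted_weight -mulrA EFinM.
rewrite nneseriesZl => [|n _]; last exact: wt0.
rewrite lee_wpmul2l ?lee_fin ?exprn_ge0 //.
rewrite (@nneseries_addn R (fun m => (2 ^- m * t m)%:E) r) //.
rewrite [leRHS](nneseries_split _ r) // add0n leeDr //.
by apply: sume_ge0 => m _.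
Qed.

Section PCAOnCylinders.
Variables (A : finType) (a0 : A).
Local Notation conf := (@conf A a0).
Local Notation pattern m := {ffun 'I_(m.*2.+1) -> A}.

Lemma win_inj n : injective (@win n).
Proof. by move=> k k' /addIr/eqP; rewrite eqz_nat => /eqP/val_inj. Qed.

Lemma win_onto m (i : int) : - (m%:Z) <= i -> i <= m%:Z -> exists k : 'I_(m.*2.+1), win k = i.
Proof.
move=> lo hi; have lt_k : (absz (i + m%:Z)%R < m.*2.+1)%N by lia.
by exists (Ordinal lt_k); rewrite /win /=; lia.
Qed.

Lemma measurable_cyl n (u : pattern n) : measurable (@cyl A a0 n u).
Proof.
have -> : @cyl A a0 n u = \bigcap_(k in [set: 'I_(n.*2.+1)]) [set x : conf | x (win k) = u k].
  by apply/seteqP; split => [x xu k _ | x xu k]; apply: xu.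
apply: fin_bigcap_measurable => [|k _]; first exact: finite_finset.
by apply: sub_sigma_algebra; exists (win k), (u k).
Qed.

Definition cyl_rep m (v : pattern m) : conf :=
  fun i => if [pick k | win k == i] is Some k then v k else a0.

Lemma cyl_rep_win m (v : pattern m) k : cyl_rep v (win k) = v k.
Proof. by rewrite /cyl_rep; case: pickP => [k' /eqP/win_inj -> | /(_ k)]; rewrite ?eqxx. Qed.

Lemma cyl_eq_rep m (v : pattern m) (x : conf) i :
  cyl v x -> - (m%:Z) <= i -> i <= m%:Z -> x i = cyl_rep v i.
Proof. by move=> xv lo hi; have [k <-] := win_onto lo hi; rewrite cyl_rep_win xv. Qed.

Variables (R : realType) (r : nat) (N : {fset int}) (phi : {ffun N -> A} -> A -> R).
Hypothesis N_radius : forall i : int, i \in N -> - (r%:Z) <= i /\ i <= r%:Z.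

Lemma kernel_cyl_local n (w : pattern n) (v : pattern (n + r)) (x : conf) :
  cyl v x -> kernel_cyl phi w x = kernel_cyl phi w (cyl_rep v).
Proof.
move=> xv; apply: eq_bigr => k _; congr (phi _ _); apply/ffunP => j; rewrite !ffunE.
have [lo hi] := N_radius (valP j); have k_lt := ltn_ord k.
by apply: (cyl_eq_rep xv); rewrite /win; move: (\val j) (nat_of_ord k) lo hi k_lt => a b;
  rewrite -!muln2; lia.
Qed.

Lemma kernel_cyl_decomp n (w : pattern n) (x : conf) :
  kernel_cyl phi w x =
  \sum_(v : pattern (n + r)) kernel_cyl phi w (cyl_rep v) * \1_(cyl v) x.
Proof.
pose vx : pattern (n + r) := [ffun k => x (win k)].
have x_vx : cyl vx x by move=> k; rewrite ffunE.
rewrite (bigD1 vx) //= big1 => [|v v_vx].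
  by rewrite indicE mem_set // mulr1 addr0 (kernel_cyl_local w x_vx).
rewrite indicE memNset ?mulr0 // => xv; move/eqP: v_vx; apply.
by apply/ffunP => k; rewrite ffunE xv.
Qed.

Hypothesis phi_stochastic : stochastic phi.

Lemma kernel_cyl_ge0 n (w : pattern n) (x : conf) : 0 <= kernel_cyl phi w x.
Proof. by apply: prodr_ge0 => k _; case: (phi_stochastic (pat N x (win k))). Qed.

Lemma sum_kernel_cyl n (x : conf) : \sum_(w : pattern n) kernel_cyl phi w x = 1.
Proof.
rewrite /kernel_cyl -(bigA_distr_bigA (fun k a => phi (pat N x (win k)) a)).
by rewrite big1 // => k _; case: (phi_stochastic (pat N x (win k))).
Qed.

Lemma integral_kernel_cyl (mu : probability conf R) n (w : pattern n) :
  (\int[mu]_x (kernel_cyl phi w x)%:E =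
   \sum_(v : pattern (n + r)) (kernel_cyl phi w (cyl_rep v))%:E * mu (@cyl A a0 _ v))%E.
Proof.
have measurable_indic_cyl v : measurable_fun setT (\1_(@cyl A a0 _ v) : conf -> R).
  by apply: measurable_indic; exact: measurable_cyl.
under eq_integral do rewrite kernel_cyl_decomp -sumEFin.
rewrite ge0_integral_sum // => [|v|v x _].
- apply: eq_bigr => v _; under eq_integral do rewrite EFinM.
  rewrite ge0_integralZl_EFin ?kernel_cyl_ge0 //; last exact/measurable_EFinP.
  by rewrite integral_indic ?setIT //; exact: measurable_cyl.
- exact/measurable_EFinP/measurable_funM.
- by rewrite lee_fin mulr_ge0 // kernel_cyl_ge0.
Qed.

Lemma pca_cylvalE (mu : probability conf R) n (w : pattern n) :
  pca_cylval phi mu w = \sum_(v : pattern (n + r)) kernel_cyl phi w (cyl_rep v) * cylval mu v.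
Proof.
have mu_cyl v : mu (@cyl A a0 _ v) = (cylval mu v)%:E.
  by rewrite /cylval fineK // fin_num_measure //; exact: measurable_cyl.
rewrite /pca_cylval integral_kernel_cyl.
by under eq_bigr do rewrite mu_cyl -EFinM; rewrite sumEFin.
Qed.

Lemma tvn_pca_le (mu nu : probability conf R) n :
  tvn (pca_cylval phi mu) (pca_cylval phi nu) n <= tvn (cylval mu) (cylval nu) (n + r).
Proof.
rewrite /tvn ler_wpM2l ?invr_ge0 //.
under eq_bigr do rewrite !pca_cylvalE -sumrB.
apply: (le_trans (ler_sum _ (fun w _ => ler_norm_sum _ _ _))).
rewrite exchange_big /=; apply: ler_sum => v _.
under eq_bigr do rewrite -mulrBr normrM (ger0_norm (kernel_cyl_ge0 _ _)).
by rewrite -mulr_suml sum_kernel_cyl mul1r.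
Qed.

End PCAOnCylinders.

Lemma tvn_ge0 (R : realType) (A : finType) (P Q : forall n, {ffun 'I_(n.*2.+1) -> A} -> R) n :
  0 <= tvn P Q n.
Proof. by rewrite mulr_ge0 ?invr_ge0 // sumr_ge0. Qed.

Unset Implicit Arguments.

Theorem mainTheorem4 (R : realType) (A : finType) (a0 : A)
    (r : nat) (N : {fset int}) (phi : {ffun N -> A} -> A -> R) :
  stochastic phi ->
  (forall i : int, i \in N -> (- (r%:Z) <= i)%R /\ (i <= r%:Z)%R) ->
  forall mu nu : probability (@conf A a0) R,
    shift_invariant mu -> shift_invariant nu ->
    (dM (pca_cylval phi mu) (pca_cylval phi nu) <= (2 ^+ r)%:E * dM (cylval mu) (cylval nu))%E.
Proof.
move=> phi_stochastic N_radius mu nu _ _.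
by apply: eseries_pow2_shift_le => n; [exact: tvn_ge0 | exact: tvn_ge0 | exact: tvn_pca_le].
Qed.
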